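(* Let $n\ge 2$ and $q>0$ be real. For all $A,B\in M_n(\mathbb{C})$ such that at least one of $A$ and $B$ is normal, $$\|AB-qBA\|_F^2\le (1+q^2)\,\|A\|_F^2\,\|B\|_F^2 ,$$ and the constant $1+q^2$ cannot be replaced by any smaller constant (the bound is attained).
   Context: $\|X\|_F=\sqrt{\operatorname{tr}(XX^\dagger)}$ denotes the Frobenius norm. *)

From HB Require Import structures.
From mathcomp Require Import all_boot all_order all_algebra.
From mathcomp Require Import spectral.
From mathcomp Require Export complex.
From mathcomp Require Export reals.
Set Implicit Arguments. Unset Strict Implicit. Unset Printing Implicit Defensive.
Import Order.TTheory GRing.Theory Num.Theory.
Local Open Scope ring_scope.
Local Open Scope sesquilinear_scope.

(* Frobenius norm ||X||_F = sqrt(tr(X X^dagger)); the trace is a nonnegative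
   real, we take its real part to land in R. *)
Definition frob (R : realType) (n : nat) (X : 'M[R[i]]_n) : R :=
  Num.sqrt (complex.Re (\tr (X *m X ^t*))).

(** A normal [A] is unitarily diagonalizable, and both the squared Frobenius
    norm and the q-commutator are compatible with unitary conjugation, so one
    may assume [A = diag d].  Then [(AB - qBA)_ij = (d_i - q d_j) B_ij], and by
    Cauchy-Schwarz [|d_i - q d_j|^2 <= (1 + q^2)(|d_i|^2 + |d_j|^2)
    <= (1 + q^2) ||A||^2] (for [i = j] use [|1 - q|^2 <= 1 + q^2]).  The case of
    a normal [B] reduces to this one through [AB - qBA = -q (BA - q^-1 AB)].
    Equality holds for [A = diag(1, -q, 0, ..., 0)] and [B = E_12]. *)

From HB Require Import structures.
From mathcomp Require Import all_boot all_order all_algebra.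
From mathcomp Require Import spectral complex reals ring.
Set Implicit Arguments. Unset Strict Implicit. Unset Printing Implicit Defensive.
Import Order.TTheory GRing.Theory Num.Theory.
Local Open Scope ring_scope.
Local Open Scope sesquilinear_scope.

Section FrobeniusBound.
Variable C : numClosedFieldType.

Definition frobsq n (X : 'M[C]_n) : C := \tr (X *m X ^t*).

Definition qcommmx n (q : C) (A B : 'M[C]_n) : 'M[C]_n :=
  A *m B - q *: (B *m A).

Lemma frobsqE n (X : 'M[C]_n) :
  frobsq X = \sum_(i < n) \sum_(j < n) `|X i j| ^+ 2.
Proof.
rewrite /frobsq /mxtrace; apply: eq_bigr => i _; rewrite mxE.
by apply: eq_bigr => j _; rewrite !mxE normCK.
Qed.

Lemma frobsq_ge0 n (X : 'M[C]_n) : 0 <= frobsq X.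
Proof.
by rewrite frobsqE; do 2![apply: sumr_ge0 => ? _]; apply: exprn_ge0.
Qed.

Lemma frobsq_eq0 n (X : 'M[C]_n) : (frobsq X == 0) = (X == 0).
Proof.
apply/idP/eqP => [|->]; last by rewrite /frobsq mul0mx mxtrace0.
have sq_ge0 (x : C) : 0 <= `|x| ^+ 2 by apply: exprn_ge0.
rewrite frobsqE psumr_eq0 => [/allP X0|i _]; last exact: sumr_ge0.
apply/matrixP => i j; have := X0 i (mem_index_enum i).
rewrite psumr_eq0 // => /allP/(_ j (mem_index_enum j)).
by rewrite !mxE sqrf_eq0 normr_eq0 => /eqP.
Qed.

Lemma frobsqZ n (c : C) (X : 'M[C]_n) : frobsq (c *: X) = `|c| ^+ 2 * frobsq X.
Proof.
rewrite !frobsqE mulr_sumr; apply: eq_bigr => i _; rewrite mulr_sumr.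
by apply: eq_bigr => j _; rewrite mxE normrM exprMn.
Qed.

Lemma frobsq_diag n (d : 'rV[C]_n) :
  frobsq (diag_mx d) = \sum_(k < n) `|d 0 k| ^+ 2.
Proof.
rewrite frobsqE; apply: eq_bigr => i _.
rewrite (bigD1 i) //= big1 ?addr0 => [|j ji]; first by rewrite mxE eqxx mulr1n.
by rewrite mxE eq_sym (negbTE ji) mulr0n normr0 expr0n.
Qed.

Lemma frobsq_delta n (i0 j0 : 'I_n) : frobsq (delta_mx i0 j0) = 1 :> C.
Proof.
rewrite frobsqE (bigD1 i0) //= (bigD1 j0) //= mxE !eqxx normr1 expr1n.
rewrite big1 => [|j /negbTE jj0]; last by rewrite mxE jj0 andbF normr0 expr0n.
rewrite addr0 big1 ?addr0 // => i /negbTE ii0.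
by rewrite big1 // => j _; rewrite mxE ii0 normr0 expr0n.
Qed.

Lemma frobsq_conj_unitary n (P X : 'M[C]_n) : P \is unitarymx ->
  frobsq (P^t* *m X *m P) = frobsq X.
Proof.
move=> Pu; rewrite /frobsq !trmx_mul !map_mxM trmxCK !mulmxA mulmxtVK //.
by rewrite mxtrace_mulC !mulmxA (unitarymxP Pu) mul1mx.
Qed.

Lemma qcommmx_conj_unitary n (q : C) (P X Y : 'M[C]_n) : P \is unitarymx ->
  qcommmx q (P^t* *m X *m P) (P^t* *m Y *m P) = P^t* *m qcommmx q X Y *m P.
Proof.
move=> Pu; have PtP : P *m P^t* = 1%:M by apply/unitarymxP.
rewrite /qcommmx mulmxBr mulmxBl -scalemxAr -scalemxAl !mulmxA.
rewrite -[P^t* *m X *m P *m P^t*]mulmxA -[P^t* *m Y *m P *m P^t*]mulmxA.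
by rewrite PtP !mulmx1.
Qed.

Lemma diag_qcommmx_entry n (q : C) (d : 'rV[C]_n) (B : 'M[C]_n) i j :
  qcommmx q (diag_mx d) B i j = (d 0 i - q * d 0 j) * B i j.
Proof. by rewrite /qcommmx mul_diag_mx mul_mx_diag !mxE; ring. Qed.

Lemma diag_mx_normal n (d : 'rV[C]_n) : diag_mx d \is normalmx.
Proof. by apply/normalmxP; rewrite tr_diag_mx map_diag_mx diag_mxC. Qed.

Lemma qcommmx_swap n (q : C) (A B : 'M[C]_n) :
  q != 0 -> qcommmx q A B = (- q) *: qcommmx q^-1 B A.
Proof.
move=> q_neq0; rewrite /qcommmx scalerBr scalerA mulNr mulfV //.
by rewrite scaleN1r scaleNr opprK addrC.
Qed.

Variable q : C.
Hypothesis q_ge0 : 0 <= q.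

Lemma normB_scale_le (a b : C) :
  `|a - q * b| ^+ 2 <= (1 + q ^+ 2) * (`|a| ^+ 2 + `|b| ^+ 2).
Proof.
rewrite -subr_ge0.
have -> : (1 + q ^+ 2) * (`|a| ^+ 2 + `|b| ^+ 2) - `|a - q * b| ^+ 2
    = `|q * a + b| ^+ 2.
  by rewrite !normCK !rmorphB !rmorphD !rmorphM /= (geC0_conj q_ge0); ring.
exact: exprn_ge0.
Qed.

Lemma normB_scale_diag_le (a : C) :
  `|a - q * a| ^+ 2 <= (1 + q ^+ 2) * `|a| ^+ 2.
Proof.
rewrite -subr_ge0.
have -> : (1 + q ^+ 2) * `|a| ^+ 2 - `|a - q * a| ^+ 2 = 2%:R * q * `|a| ^+ 2.
  by rewrite !normCK !rmorphB !rmorphM /= (geC0_conj q_ge0); ring.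
by rewrite !mulr_ge0 ?ler0n ?exprn_ge0.
Qed.

Lemma diag_qcommmx_le n (d : 'rV[C]_n) (B : 'M[C]_n) :
  frobsq (qcommmx q (diag_mx d) B)
    <= (1 + q ^+ 2) * frobsq (diag_mx d) * frobsq B.
Proof.
have q2_ge0 : 0 <= 1 + q ^+ 2 by rewrite addr_ge0 ?exprn_ge0.
have rest_ge0 (P : pred 'I_n) : 0 <= \sum_(k | P k) `|d 0 k| ^+ 2.
  by apply: sumr_ge0 => k _; apply: exprn_ge0.
have coef_le i j :
    `|d 0 i - q * d 0 j| ^+ 2 <= (1 + q ^+ 2) * frobsq (diag_mx d).
  rewrite frobsq_diag (bigD1 i) //=.
  have [->|ji] := eqVneq j i.
    apply: (le_trans (normB_scale_diag_le _)); apply: ler_wpM2l => //.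
    by rewrite lerDl.
  rewrite (bigD1 j) //= addrA; apply: (le_trans (normB_scale_le _ _)).
  by apply: ler_wpM2l => //; rewrite lerDl.
rewrite [frobsq (qcommmx _ _ _)]frobsqE [frobsq B]frobsqE mulr_sumr.
apply: ler_sum => i _; rewrite mulr_sumr; apply: ler_sum => j _.
rewrite diag_qcommmx_entry normrM exprMn.
by apply: ler_wpM2r; [apply: exprn_ge0 | apply: coef_le].
Qed.

Lemma qcommmx_normall_le n (A B : 'M[C]_n) : A \is normalmx ->
  frobsq (qcommmx q A B) <= (1 + q ^+ 2) * frobsq A * frobsq B.
Proof.
move=> /orthomx_spectralP; set P := spectralmx A; set d := spectral_diag A.
have Pu : P \is unitarymx by apply: spectral_unitarymx.
rewrite invmx_unitary // => ->.
have -> : B = P^t* *m (P *m B *m P^t*) *m P.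
  have PtP : P^t* *m P = 1%:M by rewrite -[P^t*]mul1mx mulmxKtV.
  by rewrite !mulmxA PtP mul1mx mulmxKtV.
rewrite qcommmx_conj_unitary // !frobsq_conj_unitary //.
exact: diag_qcommmx_le.
Qed.

Lemma qcommmx_extremal m : exists A B : 'M[C]_m.+2,
  [/\ A \is normalmx, A != 0, B != 0 &
       frobsq (qcommmx q A B) = (1 + q ^+ 2) * frobsq A * frobsq B].
Proof.
pose d : 'rV[C]_m.+2 :=
  \row_k (if k == ord0 then 1 else if k == ord_max then - q else 0).
have d0 : d 0 ord0 = 1 by rewrite mxE eqxx.
have d1 : d 0 ord_max = - q by rewrite mxE /= eqxx.
have q2_neq0 : 1 + q ^+ 2 != 0 by rewrite paddr_eq0 ?oner_eq0 ?exprn_ge0.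
have frobA : frobsq (diag_mx d) = 1 + q ^+ 2.
  rewrite frobsq_diag (bigD1 ord0) //= (bigD1 ord_max) //=.
  rewrite big1 => [|k /andP[k0 k1]].
    by rewrite d0 d1 normr1 expr1n normrN (ger0_norm q_ge0) addr0.
  by rewrite mxE (negbTE k0) (negbTE k1) normr0 expr0n.
have comm : qcommmx q (diag_mx d) (delta_mx ord0 ord_max)
    = (1 + q ^+ 2) *: delta_mx ord0 ord_max.
  apply/matrixP => r c; rewrite diag_qcommmx_entry !mxE.
  have [_ | _] := eqVneq r ord0; last by rewrite !mulr0.
  have [-> | _] := eqVneq c ord_max; last by rewrite !mulr0.
  by rewrite /= mulrN opprK expr2.
exists (diag_mx d), (delta_mx ord0 ord_max); split.
- exact: diag_mx_normal.
- by rewrite -frobsq_eq0 frobA.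
- by rewrite -frobsq_eq0 frobsq_delta oner_eq0.
- rewrite comm frobsqZ frobsq_delta frobA.
  by rewrite ger0_norm ?addr_ge0 ?exprn_ge0 // expr2.
Qed.

End FrobeniusBound.

Lemma qcommmx_normalr_le (C : numClosedFieldType) n (q : C) (A B : 'M[C]_n) :
  0 < q -> B \is normalmx ->
  frobsq (qcommmx q A B) <= (1 + q ^+ 2) * frobsq A * frobsq B.
Proof.
move=> q_gt0 Bn; have q_neq0 := lt0r_neq0 q_gt0.
have qV_ge0 : 0 <= q^-1 by rewrite invr_ge0 ltW.
rewrite qcommmx_swap // frobsqZ normrN (ger0_norm (ltW q_gt0)).
have -> : (1 + q ^+ 2) * frobsq A * frobsq B
    = q ^+ 2 * ((1 + q^-1 ^+ 2) * frobsq B * frobsq A) by field.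
by rewrite ler_pM2l ?exprn_gt0 //; apply: qcommmx_normall_le.
Qed.

Lemma frobsq_Re (R : realType) n (X : 'M[R[i]]_n) :
  frobsq X = ((complex.Re (frobsq X))%:C)%C.
Proof. by rewrite [LHS]complexE (ger0_Im (frobsq_ge0 X)) mulr0 addr0. Qed.

Lemma frob_sqr (R : realType) n (X : 'M[R[i]]_n) :
  frob X ^+ 2 = complex.Re (frobsq X).
Proof.
by rewrite sqr_sqrtr //; move: (frobsq_ge0 X); rewrite lecE => /andP[].
Qed.

Lemma frob_sqr_gt0 (R : realType) n (X : 'M[R[i]]_n) :
  (0 < frob X ^+ 2) = (X != 0).
Proof.
by rewrite frob_sqr -ltcR rmorph0 -frobsq_Re lt_def frobsq_eq0 frobsq_ge0 andbT.
Qed.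

Lemma frob_qcommmx_le (R : realType) n (q : R) (A B : 'M[R[i]]_n) : 0 < q ->
  A \is normalmx \/ B \is normalmx ->
  frob (A *m B - (q%:C)%C *: (B *m A)) ^+ 2
    <= (1 + q ^+ 2) * frob A ^+ 2 * frob B ^+ 2.
Proof.
move=> q_gt0 AB_normal; have qC_gt0 : 0 < (q%:C)%C by rewrite ltcR.
rewrite !frob_sqr -lecR !rmorphM rmorphD rmorph1 rmorphXn /= -!frobsq_Re.
case: AB_normal => [An | Bn]; last exact: qcommmx_normalr_le.
by apply: qcommmx_normall_le An; rewrite ltW.
Qed.

Lemma frob_qcommmx_extremal (R : realType) m (q : R) : 0 <= q ->
  exists A B : 'M[R[i]]_m.+2, [/\ A \is normalmx, A != 0, B != 0 &
    frob (A *m B - (q%:C)%C *: (B *m A)) ^+ 2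
      = (1 + q ^+ 2) * frob A ^+ 2 * frob B ^+ 2].
Proof.
move=> q_ge0; have qC_ge0 : 0 <= (q%:C)%C by rewrite lecR.
have [A [B [An A_neq0 B_neq0 AB_eq]]] := qcommmx_extremal qC_ge0 m.
exists A, B; split => //; apply: complexI.
by rewrite !frob_sqr !rmorphM rmorphD rmorph1 rmorphXn /= -!frobsq_Re.
Qed.

Theorem proposition2 (R : realType) (n : nat) (q : R) :
  (2 <= n)%N -> 0 < q ->
  (forall A B : 'M[R[i]]_n, A \is normalmx \/ B \is normalmx ->
     frob (A *m B - (q%:C)%C *: (B *m A)) ^+ 2
       <= (1 + q ^+ 2) * frob A ^+ 2 * frob B ^+ 2)
  /\ (forall c : R,
        (forall A B : 'M[R[i]]_n, A \is normalmx \/ B \is normalmx ->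
           frob (A *m B - (q%:C)%C *: (B *m A)) ^+ 2
             <= c * frob A ^+ 2 * frob B ^+ 2) ->
        1 + q ^+ 2 <= c)
  /\ (exists A B : 'M[R[i]]_n, [/\ A \is normalmx \/ B \is normalmx,
        A != 0, B != 0 &
        frob (A *m B - (q%:C)%C *: (B *m A)) ^+ 2
          = (1 + q ^+ 2) * frob A ^+ 2 * frob B ^+ 2]).
Proof.
case: n => [|[|m]] // _ q_gt0.
have [A [B [An A_neq0 B_neq0 AB_eq]]] := frob_qcommmx_extremal m (ltW q_gt0).
split; first by move=> A' B'; apply: frob_qcommmx_le.
split=> [c c_bound|]; last by exists A, B; split => //; left.
have := c_bound A B (or_introl An).
by rewrite AB_eq !ler_pM2r ?frob_sqr_gt0.
Qed.
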